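(* Let $n$ be divisible by $4$, $m=n/4$, and let $R=S\times T$ with $S\subseteq\mathcal{P}(X)$, $T\subseteq\mathcal{P}(Y)$ be a $[1,n]$-rectangle. Then \[ \big||R\cap A|-|R\cap B|\big|\le 2^{3m}. \]
   Context: $X=\{x_1,\dots,x_n\}$, $Y=\{y_1,\dots,y_n\}$, $Z=X\cup Y$, $z_i=x_i$ ($i\in[n]$), $z_i=y_{i-n}$ ($i\in[n+1,2n]$), $Z[i,j]=\{z_\ell:i\le\ell\le j\}$. $S\times T=\{U\cup V:U\in S,V\in T\}$. With $m=n/4$, intervals $I_k=Z[4(k-1)+1,4k]$, $k\in[2m]$. $\mathcal{L}=\{U\subseteq Z: |U\cap I_k|=1\ \forall k\in[2m]\}$. $A=\{U\in\mathcal{L}: |\{i\in[n]: x_i,y_i\in U\}| \text{ odd}\}$, $B=\mathcal{L}\setminus A$. *)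

(* Z = {z_1,...,z_2n} is modelled as 'I_(2n) with z_i <-> index i-1.
   x_i = z_i (indices 0..n-1), y_i = z_(n+i) (indices n..2n-1). *)
From mathcomp Require Import all_boot all_order all_algebra.
Set Implicit Arguments. Unset Strict Implicit. Unset Printing Implicit Defensive.

Definition Xset (n : nat) : {set 'I_(n + n)} := [set j : 'I_(n + n) | j < n].
Definition Yset (n : nat) : {set 'I_(n + n)} := [set j : 'I_(n + n) | n <= j].

(* the interval I_k = Z[4(k-1)+1, 4k] for k in [2m]; here k is 0-based: k' = k-1,
   so I_(k'+1) = {z_l : 4k'+1 <= l <= 4k'+4} = indices 4k' .. 4k'+3 *)
Definition Ival (n k : nat) : {set 'I_(n + n)} :=
  [set j : 'I_(n + n) | (4 * k <= j) && (j < 4 * k + 4)].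

Definition rectprod (n : nat) (S T : {set {set 'I_(n + n)}}) : {set {set 'I_(n + n)}} :=
  [set U :|: V | U in S, V in T].

Definition Lfam (n : nat) : {set {set 'I_(n + n)}} :=
  [set U : {set 'I_(n + n)} | [forall k : 'I_(2 * (n %/ 4)), #|U :&: Ival n k| == 1]].

Definition npairs (n : nat) (U : {set 'I_(n + n)}) : nat :=
  #|[set i : 'I_n | (lshift n i \in U) && (rshift n i \in U)]|.

Definition Afam (n : nat) : {set {set 'I_(n + n)}} :=
  [set U in Lfam n | odd (npairs U)].

Definition Bfam (n : nat) : {set {set 'I_(n + n)}} := Lfam n :\: Afam n.

(* An element of L is determined block by block: in each block I_k of four
   consecutive points it picks one point, i.e. a position in [4].  For U in S
   and V in T with U :|: V in L, let a, b in [4]^m be the positions chosen on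
   the X-blocks and on the Y-blocks.  The pair x_i, y_i lies in U :|: V exactly
   when a and b agree on the block of i, so U :|: V is in A or B according to
   the sign (-1)^#{k | a_k = b_k}, which is the (a, b) entry of the m-th tensor
   power H of the 4 x 4 matrix J - 2I.  The columns of H are orthogonal of
   squared norm 4^m, so by Cauchy-Schwarz (Lindsey's lemma) the sum of H over
   an A' x B' submatrix is at most sqrt(|A'| 4^m |B'|) <= sqrt(4^(3m)). *)
From mathcomp Require Import all_boot all_order all_algebra zify ring lra.
Set Implicit Arguments. Unset Strict Implicit. Unset Printing Implicit Defensive.
Import Order.TTheory GRing.Theory Num.Theory.

Lemma in_Ival n t (j : 'I_(n + n)) : (j \in Ival n t) = (j %/ 4 == t).
Proof. by rewrite inE; apply/idP/eqP => ?; lia. Qed.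

Definition block_pos n (U : {set 'I_(n + n)}) t : 'I_4 :=
  if [pick j in U :&: Ival n t] is Some j then inord (j %% 4) else ord0.

Lemma block_posP n (U : {set 'I_(n + n)}) t : #|U :&: Ival n t| == 1 ->
  forall j, (j \in U :&: Ival n t) = (val j == 4 * t + block_pos U t).
Proof.
move/cards1P => [j0 U_t] j.
have /setIP[_] : j0 \in U :&: Ival n t by rewrite U_t set11.
rewrite in_Ival => /eqP j0_t.
have -> : block_pos U t = inord (j0 %% 4).
  rewrite /block_pos; case: pickP => [j1|/(_ j0)]; last by rewrite U_t set11.
  by rewrite U_t inE => /eqP ->.
rewrite U_t inE inordK ?ltn_pmod //.
apply/eqP/eqP => [->|/= j_val] /=; first by lia.
by apply: val_inj => /=; lia.
Qed.

Definition one_per_block n m off (U : {set 'I_(n + n)}) :=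
  [forall k : 'I_m, #|U :&: Ival n (off + k)| == 1].

Definition block_code n m off (U : {set 'I_(n + n)}) : {ffun 'I_m -> 'I_4} :=
  [ffun k : 'I_m => block_pos U (off + k)].

Lemma mem_block_code n m off (U : {set 'I_(n + n)}) (k : 'I_m) (j : 'I_(n + n)) :
  one_per_block m off U -> j %/ 4 = off + k ->
  (j \in U) = (j %% 4 == block_code m off U k).
Proof.
move=> /forallP/(_ k)/block_posP posP j_k.
have j_in : j \in Ival n (off + k) by rewrite in_Ival j_k.
rewrite -[j \in U]andbT -j_in -in_setI posP ffunE.
by apply/eqP/eqP => /= ?; lia.
Qed.

Lemma block_code_inj_in n m off (W : {set {set 'I_(n + n)}}) :
  (forall U, U \in W -> forall j : 'I_(n + n), j \in U -> 4 * off <= j < 4 * (off + m)) ->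
  {in [set U in W | one_per_block m off U] &, injective (block_code m off)}.
Proof.
move=> W_range U U'; rewrite !inE => /andP[/W_range rangeU blockU].
move=> /andP[/W_range rangeU' blockU'] eq_code; apply/setP => j.
have [j_range|j_out] := boolP (4 * off <= j < 4 * (off + m)); last first.
  by apply/idP/idP => [/rangeU|/rangeU'] j_in; rewrite j_in in j_out.
have k_lt : j %/ 4 - off < m by lia.
have j_k : j %/ 4 = off + Ordinal k_lt by rewrite /=; lia.
by rewrite (mem_block_code blockU j_k) (mem_block_code blockU' j_k) eq_code.
Qed.

Section Halves.

Variables (n : nat) (U V : {set 'I_(n + n)}).
Hypotheses (UX : U \subset Xset n) (VY : V \subset Yset n).

Lemma setUXI : (U :|: V) :&: Xset n = U.
Proof.
rewrite setIUl (setIidPl UX); apply/setUidPl/subsetP => j.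
by rewrite !inE => /andP[/(subsetP VY)]; rewrite inE; lia.
Qed.

Lemma setUYI : (U :|: V) :&: Yset n = V.
Proof.
rewrite setIUl (setIidPl VY); apply/setUidPr/subsetP => j.
by rewrite !inE => /andP[/(subsetP UX)]; rewrite inE; lia.
Qed.

Lemma setUIval_X t : 4 * t + 4 <= n -> (U :|: V) :&: Ival n t = U :&: Ival n t.
Proof.
move=> t_lt; have /setIidPr IvalX : Ival n t \subset Xset n.
  by apply/subsetP => j; rewrite !inE => /andP[_]; lia.
by rewrite -{2}setUXI -setIA IvalX.
Qed.

Lemma setUIval_Y t : n <= 4 * t -> (U :|: V) :&: Ival n t = V :&: Ival n t.
Proof.
move=> t_ge; have /setIidPr IvalY : Ival n t \subset Yset n.
  by apply/subsetP => j; rewrite !inE => /andP[]; lia.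
by rewrite -{2}setUYI -setIA IvalY.
Qed.

Hypothesis n4 : 4 %| n.
Local Notation m := (n %/ 4).

Lemma Lfam_setU : (U :|: V \in Lfam n) = one_per_block m 0 U && one_per_block m m V.
Proof.
rewrite inE; apply/forallP/andP => [blockUV|[/forallP blockU /forallP blockV] k].
  split; apply/forallP => k.
    have k_lt : k < 2 * m by have := ltn_ord k; lia.
    by move: (blockUV (Ordinal k_lt)); rewrite /= add0n setUIval_X //; have := ltn_ord k; lia.
  have k_lt : m + k < 2 * m by have := ltn_ord k; lia.
  by move: (blockUV (Ordinal k_lt)); rewrite /= setUIval_Y //; lia.
have [k_lt|k_ge] := ltnP k m.
  by move: (blockU (Ordinal k_lt)); rewrite /= add0n setUIval_X //; lia.
have k_lt : k - m < m by have := ltn_ord k; lia.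
by move: (blockV (Ordinal k_lt)); rewrite /= subnKC // setUIval_Y //; lia.
Qed.

Hypotheses (blockU : one_per_block m 0 U) (blockV : one_per_block m m V).

Lemma lshift_in_setU (i : 'I_n) (k : 'I_m) : i %/ 4 = k ->
  (lshift n i \in U :|: V) = (i %% 4 == block_code m 0 U k).
Proof.
move=> i_k; rewrite inE (mem_block_code (k := k) blockU) //.
suff /negbTE-> : lshift n i \notin V by rewrite orbF.
by apply/negP => /(subsetP VY); rewrite inE /=; have := ltn_ord i; lia.
Qed.

Lemma rshift_in_setU (i : 'I_n) (k : 'I_m) : i %/ 4 = k ->
  (rshift n i \in U :|: V) = (i %% 4 == block_code m m V k).
Proof.
move=> i_k; rewrite inE (mem_block_code (k := k) blockV) /=; last by lia.
have -> : (n + i) %% 4 = i %% 4 by lia.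
suff /negbTE-> : rshift n i \notin U by [].
by apply/negP => /(subsetP UX); rewrite inE /=; lia.
Qed.

Lemma npairs_setU :
  npairs (U :|: V) = #|[set k : 'I_m | block_code m 0 U k == block_code m m V k]|.
Proof.
have blk_lt (i : 'I_n) : i %/ 4 < m by have := ltn_ord i; lia.
pose blk i := Ordinal (blk_lt i).
have in_pairs (i : 'I_n) := congr2 andb (lshift_in_setU (erefl : i %/ 4 = blk i))
                               (rshift_in_setU (erefl : i %/ 4 = blk i)).
rewrite /npairs (eq_finset _ in_pairs) -(card_in_imset (f := blk)); last first.
  move=> i i'; rewrite !inE => /andP[/eqP a_i _] /andP[/eqP a_i' _] blk_ii'.
  have := congr1 val blk_ii'; rewrite /= => div_ii'.
  by apply: val_inj => /=; move: a_i a_i'; rewrite blk_ii'; lia.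
apply: eq_card => k; rewrite [RHS]inE; apply/imsetP/idP => [[i]|ab_k].
  rewrite inE => /andP[/eqP a_i /eqP b_i] ->.
  by apply/eqP/val_inj; rewrite /= -a_i -b_i.
have a_k_lt := ltn_ord (block_code m 0 U k).
have i_lt : 4 * k + block_code m 0 U k < n by have := ltn_ord k; lia.
have blk_i : blk (Ordinal i_lt) = k by apply: val_inj => /=; lia.
exists (Ordinal i_lt); rewrite // inE blk_i -(eqP ab_k) /=.
by rewrite andbb; apply/eqP; lia.
Qed.

End Halves.

Local Open Scope ring_scope.

Lemma sqr_sum_le_card_sum_sqr (R : realDomainType) (I : finType) (A : {pred I})
    (z : I -> R) :
  (\sum_(i in A) z i) ^+ 2 <= #|A|%:R * \sum_(i in A) z i ^+ 2.
Proof.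
set s1 := \sum_(i in A) z i; set s2 := \sum_(i in A) z i ^+ 2.
have sum_sq_diff : \sum_(i in A) \sum_(j in A) (z i - z j) ^+ 2 =
    #|A|%:R * s2 - s1 ^+ 2 *+ 2 + #|A|%:R * s2.
  have sum_sq : \sum_(i in A) \sum_(j in A) z i ^+ 2 = #|A|%:R * s2.
    by rewrite mulr_sumr; apply: eq_bigr => i _; rewrite sumr_const mulr_natl.
  have sum_sq' : \sum_(i in A) \sum_(j in A) z j ^+ 2 = #|A|%:R * s2.
    by rewrite sumr_const mulr_natl.
  have sum_prod : \sum_(i in A) \sum_(j in A) z i * z j *+ 2 = s1 ^+ 2 *+ 2.
    rewrite expr2 big_distrl -sumrMnl; apply: eq_bigr => i _.
    by rewrite big_distrr -sumrMnl.
  rewrite -{1}sum_sq -sum_sq' -sum_prod -sumrB -big_split /=.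
  apply: eq_bigr => i _; rewrite -sumrB -big_split /=.
  by apply: eq_bigr => j _; rewrite sqrrB.
have : 0 <= \sum_(i in A) \sum_(j in A) (z i - z j) ^+ 2.
  by apply: sumr_ge0 => i _; apply: sumr_ge0 => j _; apply: sqr_ge0.
rewrite sum_sq_diff mulr2n; lra.
Qed.

Definition orthogonal_kernel (R : pzRingType) (I J : finType) (K : I -> J -> R) (c : R) :=
  forall b b', \sum_a K a b * K a b' = if b == b' then c else 0.

Section OrthogonalKernel.

Variables (R : realDomainType) (I J : finType) (K : I -> J -> R) (c : R).
Hypothesis K_orth : orthogonal_kernel K c.

Lemma sum_sqr_kernel_row_sums (B : {pred J}) :
  \sum_a (\sum_(b in B) K a b) ^+ 2 = c * #|B|%:R.
Proof.
under eq_bigr => a _ do rewrite expr2 big_distrl /=.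
under eq_bigr => a _ do under eq_bigr => b _ do rewrite big_distrr /=.
rewrite exchange_big /=.
under eq_bigr => b _ do rewrite exchange_big /=.
under eq_bigr => b _ do under eq_bigr => b' _ do rewrite K_orth.
rewrite -sum1_card natr_sum mulr_sumr; apply: eq_bigr => b Bb.
rewrite -big_mkcondr (big_pred1 b) ?mulr1 // => b' /=.
by rewrite eq_sym andbC; case: eqP => // ->.
Qed.

Lemma sqr_kernel_block_sum_le (A : {pred I}) (B : {pred J}) :
  (\sum_(a in A) \sum_(b in B) K a b) ^+ 2 <= #|A|%:R * (c * #|B|%:R).
Proof.
apply: (le_trans (sqr_sum_le_card_sum_sqr _ _)).
rewrite ler_wpM2l // -sum_sqr_kernel_row_sums [leRHS](bigID [in A]) /= lerDl.
by apply: sumr_ge0 => a _; apply: sqr_ge0.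
Qed.

End OrthogonalKernel.

Definition kernel_pow (R : pzRingType) (I J D : finType) (K : I -> J -> R)
    (a : {ffun D -> I}) (b : {ffun D -> J}) : R :=
  \prod_d K (a d) (b d).

Lemma kernel_pow_orthogonal (R : comPzRingType) (I J D : finType) (K : I -> J -> R) c :
  orthogonal_kernel K c -> orthogonal_kernel (@kernel_pow R I J D K) (c ^+ #|D|).
Proof.
move=> K_orth b b'; rewrite /kernel_pow.
under eq_bigr => a _ do rewrite -big_split /=.
rewrite -(bigA_distr_bigA (fun d x => K x (b d) * K x (b' d))) /=.
under eq_bigr => d _ do rewrite K_orth.
case: eqP => [<-|/eqP neq].
  by under eq_bigr => d _ do rewrite eqxx; rewrite prodr_const.
have [d neq_d] : exists d, b d != b' d.
  apply/existsP; apply: contraR neq => /existsPn eq_bb'.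
  by apply/eqP/ffunP => d; apply/eqP; rewrite -[_ == _]negbK eq_bb'.
by rewrite (bigD1 d) //= (negbTE neq_d) mul0r.
Qed.

Definition hadamard4 (R : pzRingType) (x y : 'I_4) : R := if x == y then -1 else 1.

Lemma hadamard4_orthogonal (R : comPzRingType) : orthogonal_kernel (@hadamard4 R) 4.
Proof.
move=> y y'; rewrite !big_ord_recl big_ord0 /hadamard4.
case: y y' => [[|[|[|[|//]]]] ?] [[|[|[|[|//]]]] ?] /=; ring.
Qed.

Lemma hadamard4_pow_sign m (a b : {ffun 'I_m -> 'I_4}) :
  kernel_pow (@hadamard4 int) a b = (-1) ^+ #|[set k | a k == b k]|.
Proof.
rewrite -prodr_const big_mkcond /=; apply: eq_bigr => k _.
by rewrite inE /hadamard4; case: (a k == b k).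
Qed.

Lemma hadamard4_pow_block_sum_bound m (A B : {set {ffun 'I_m -> 'I_4}}) :
  `|\sum_(a in A) \sum_(b in B) kernel_pow (@hadamard4 int) a b| <= (2 ^ (3 * m))%:Z.
Proof.
have card_le (C : {set {ffun 'I_m -> 'I_4}}) : #|C|%:R <= 4 ^+ m :> int.
  by rewrite -natrX ler_nat (leq_trans (max_card C)) // card_ffun !card_ord.
have := sqr_kernel_block_sum_le (kernel_pow_orthogonal (hadamard4_orthogonal int)) A B.
rewrite card_ord => sum_sqr_le.
rewrite -ler_sqr ?nnegrE // real_normK ?num_real // (le_trans sum_sqr_le) //.
have -> : (2 ^ (3 * m))%:Z ^+ 2 = 4 ^+ m * (4 ^+ m * 4 ^+ m).
  by rewrite -natz natrX -exprM -!exprMn mulnC mulnA exprM.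
by rewrite ler_pM ?ler_pM ?mulr_ge0 ?exprn_ge0 ?card_le.
Qed.

Lemma card_setI_sum (T : finType) (R P : {set T}) :
  #|R :&: P|%:Z = \sum_(W in R) (W \in P)%:R.
Proof.
rewrite -natz -sum1_card natr_sum (eq_bigl (fun W => (W \in R) && (W \in P))).
  by rewrite big_mkcondr; apply: eq_bigr => W _; case: (W \in P).
by move=> W; rewrite inE.
Qed.

Lemma sum_if_imset (R : nmodType) (I J : finType) (S : {set I}) (P : pred I)
    (f : I -> J) (G : J -> R) :
  {in [set x in S | P x] &, injective f} ->
  \sum_(x in S) (if P x then G (f x) else 0) = \sum_(y in f @: [set x in S | P x]) G y.
Proof.
move=> f_inj; rewrite big_imset // [RHS](eq_bigl (fun x => (x \in S) && P x)) ?big_mkcondr //.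
by move=> x; rewrite inE.
Qed.

Lemma sum_rectprod (R : nmodType) n (S T : {set {set 'I_(n + n)}})
    (F : {set 'I_(n + n)} -> R) :
  (forall U, U \in S -> U \subset Xset n) -> (forall V, V \in T -> V \subset Yset n) ->
  \sum_(W in rectprod S T) F W = \sum_(U in S) \sum_(V in T) F (U :|: V).
Proof.
move=> SX TY; rewrite /rectprod curry_imset2X big_imset /=; last first.
  move=> [U V] [U' V'] /setXP[/SX UX /TY VY] /setXP[/SX U'X /TY V'Y] /= eqUV.
  by congr pair; [rewrite -(setUXI UX VY) eqUV setUXI | rewrite -(setUYI UX VY) eqUV setUYI].
by rewrite pair_big; apply: eq_big => [[U V]|[U V] _]; rewrite ?in_setX.
Qed.

Definition block_codes n m off (W : {set {set 'I_(n + n)}}) : {set {ffun 'I_m -> 'I_4}} :=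
  block_code m off @: [set U in W | one_per_block m off U].

Section Discrepancy.

Variables (n : nat) (S T : {set {set 'I_(n + n)}}).
Hypotheses (n4 : (4 %| n)%N)
  (SX : forall U, U \in S -> U \subset Xset n) (TY : forall V, V \in T -> V \subset Yset n).
Local Notation m := (n %/ 4)%N.

Lemma discrepancy_setU (U V : {set 'I_(n + n)}) : U \subset Xset n -> V \subset Yset n ->
  (U :|: V \in Afam n)%:R - (U :|: V \in Bfam n)%:R =
  if one_per_block m 0 U && one_per_block m m V
  then - kernel_pow (@hadamard4 int) (block_code m 0 U) (block_code m m V) else 0.
Proof.
move=> UX VY; rewrite /Bfam in_setD /Afam in_set Lfam_setU //.
case: (boolP (one_per_block m 0 U)) => blockU //=.
case: (boolP (one_per_block m m V)) => blockV //=.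
by rewrite hadamard4_pow_sign -npairs_setU // -signr_odd; case: odd.
Qed.

Lemma rectprod_discrepancy :
  #|rectprod S T :&: Afam n|%:Z - #|rectprod S T :&: Bfam n|%:Z =
  - \sum_(a in block_codes m 0 S) \sum_(b in block_codes m m T)
      kernel_pow (@hadamard4 int) a b.
Proof.
have [injS injT] :
    {in [set U in S | one_per_block m 0 U] &, injective (block_code m 0)} /\
    {in [set V in T | one_per_block m m V] &, injective (block_code m m)}.
  split; apply: block_code_inj_in; [move=> U /SX | move=> V /TY];
    by move=> /subsetP W_sub j /W_sub; rewrite inE /=; have := ltn_ord j; lia.
rewrite !card_setI_sum -sumrB sum_rectprod // /block_codes -sumrN.
rewrite -(sum_if_imset (fun a => - \sum_(b in _) kernel_pow _ a b) injS).
apply: eq_bigr => U SU; case: (boolP (one_per_block m 0 U)) => blockU; last first.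
  by rewrite big1 // => V TV; rewrite discrepancy_setU ?SX ?TY // (negbTE blockU).
rewrite -sumrN -(sum_if_imset (fun b => - kernel_pow _ (block_code m 0 U) b) injT).
by apply: eq_bigr => V TV; rewrite discrepancy_setU ?SX ?TY // blockU.
Qed.

End Discrepancy.

Local Close Scope ring_scope.

Theorem mainTheorem11 (n : nat) (Hn : 4 %| n)
  (S T : {set {set 'I_(n + n)}})
  (HS : forall U, U \in S -> U \subset Xset n)
  (HT : forall V, V \in T -> V \subset Yset n) :
  (`| (#|rectprod S T :&: Afam n|%:Z - #|rectprod S T :&: Bfam n|%:Z) |
     <= (2 ^ (3 * (n %/ 4)))%:Z)%R.
Proof. by rewrite rectprod_discrepancy // normrN hadamard4_pow_block_sum_bound. Qed.
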